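(* In the sigmoid setting with algorithm RCDB-S described in the context, suppose the events $\mathcal E_1=\{\|\theta^*-\theta_t\|_{\Sigma_t}\le\beta_t\ \forall t\}$ and $\mathcal E_2=\{\|\theta^*-\theta_t\|_{\Lambda_t}\le\tilde\beta_t\ \forall t\}$ hold. Then for every $t\in[T]$: (i) $v_t\le\dot\sigma\big((\phi(x_t,a_t)-\phi(x_t,b_t))^\top\theta^*\big)$; and (ii) the per-round regret satisfies $$2r^*(x_t,a_t^* )-r^*(x_t,a_t)-r^*(x_t,b_t)\le2\tilde\beta_t\|\phi(x_t,a_t)-\phi(x_t,b_t)\|_{\Lambda_t^{-1}}.$$
   Context: Sigmoid setting. Context set $\mathcal X$, action set $\mathcal A$, known feature map $\phi:\mathcal X\times\mathcal A\to\mathbb R^d$ with $\|\phi(x,a)\|_2\le1$; unknown $\theta^*$ with $\|\theta^*\|_2\le B$; reward $r^*(x,a)=\langle\theta^*,\phi(x,a)\rangle$; $a_t^*=\arg\max_a r^*(x_t,a)$. Link function $\sigma(z)=1/(1+e^{-z})$, $\dot\sigma(z)=e^{-z}/(1+e^{-z})^2$, and $\kappa>0$ is a constant with $\dot\sigma(\langle\phi(x,a)-\phi(x,b),\theta\rangle)\ge\kappa$ for all $x,a,b$ and $\|\theta\|_2\le B$. In each round $t$: context $x_t$ revealed, agent picks $a_t,b_t$; a true label $l_t\in\{0,1\}$ with $\Pr(l_t=1\mid\text{past},x_t,a_t,b_t)=\sigma(\langle\phi(x_t,a_t)-\phi(x_t,b_t),\theta^*\rangle)$; an adversary seeing $x_t,a_t,b_t,l_t$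 chooses $c_t\in\{0,1\}$; agent observes $o_t=l_t$ if $c_t=0$, $o_t=1-l_t$ if $c_t=1$. Notation $\phi_i=\phi(x_i,a_i)-\phi(x_i,b_i)$, $\|v\|_M=\sqrt{v^\top Mv}$. Algorithm RCDB-S (parameters $\alpha>0$, $\lambda>0$, $\kappa$, positive radii $\beta_t,\tilde\beta_t$): for $t=1,\dots,T$: (1) $\Sigma_t=\lambda I+\sum_{i=1}^{t-1}w_i\kappa\,\phi_i\phi_i^\top$ and $\Lambda_t=\lambda I+\sum_{i=1}^{t-1}w_iv_i\,\phi_i\phi_i^\top$; (2) $\theta_t$ solves $\lambda\theta+\sum_{i=1}^{t-1}w_i(\sigma(\phi_i^\top\theta)-o_i)\phi_i=0$; (3) observe $x_t$, choose $(a_t,b_t)\in\arg\max_{a,b}\{(\phi(x_t,a)+\phi(x_t,b))^\top\theta_t+\tilde\beta_t\|\phi(x_t,a)-\phi(x_t,b)\|_{\Lambda_t^{-1}}\}$; (4) observe $o_t$, set $w_t=\min\{1,\alpha/\|\phi_t\|_{\Sigma_t^{-1}}\}$; (5) set $\hat\Delta_t=|\phi_t^\top\theta_t|+\beta_t\|\phi_t\|_{\Sigma_t^{-1}}$ and $v_t=\max\{\kappa,\dot\sigma(\hat\Delta_t)\}$. *)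

From HB Require Import structures.
From mathcomp Require Import all_boot all_order all_algebra.
From mathcomp Require Import reals sequences exp.

Set Implicit Arguments.
Unset Strict Implicit.
Unset Printing Implicit Defensive.

Import Order.TTheory GRing.Theory Num.Theory.
Local Open Scope ring_scope.

Section Defs.
Variable R : realType.

Definition sigmoid (z : R) : R := 1 / (1 + expR (- z)).
Definition dsigmoid (z : R) : R := expR (- z) / (1 + expR (- z)) ^+ 2.

Variable d : nat.

Definition inner (u v : 'cV[R]_d) : R := (u^T *m v) 0 0.
Definition norm2 (v : 'cV[R]_d) : R := Num.sqrt (inner v v).
Definition mnorm (M : 'M[R]_d) (v : 'cV[R]_d) : R :=
  Num.sqrt ((v^T *m M *m v) 0 0).

Variables (X A : Type) (phi : X -> A -> 'cV[R]_d).
Variables (x : nat -> X) (a b : nat -> A).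

Definition dphi (i : nat) : 'cV[R]_d := phi (x i) (a i) - phi (x i) (b i).

Definition SigmaM (lambda kappa : R) (w : nat -> R) (t : nat) : 'M[R]_d :=
  lambda%:M + \sum_(1 <= i < t) (w i * kappa) *: (dphi i *m (dphi i)^T).

Definition LambdaM (lambda : R) (w v : nat -> R) (t : nat) : 'M[R]_d :=
  lambda%:M + \sum_(1 <= i < t) (w i * v i) *: (dphi i *m (dphi i)^T).

Definition mle_eq (lambda : R) (w : nat -> R) (o : nat -> bool) (t : nat)
    (th : 'cV[R]_d) : Prop :=
  lambda *: th + \sum_(1 <= i < t)
     (w i * (sigmoid (inner (dphi i) th) - (o i)%:R)) *: dphi i = 0.

End Defs.

(** On the event E_1, Cauchy-Schwarz for the dual pair of norms ||.||_Sigma_t and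
    ||.||_{Sigma_t^-1} puts phi_t^T theta_star within beta_t ||phi_t||_{Sigma_t^-1}
    of phi_t^T theta_t, so |phi_t^T theta_star| is at most the optimistic estimate
    Delta_t; as dsigmoid decreases in |z| and dominates kappa on the B-ball, v_t is
    at most dsigmoid (phi_t^T theta_star).  For the regret, E_2 and the same
    Cauchy-Schwarz inequality bound the true gap in any direction by its bonus
    betat_t ||.||_{Lambda_t^-1}; comparing the selected pair (a_t, b_t) with
    (a_t^star, b_t) and (a_t^star, a_t) in the selection rule, the estimated
    rewards cancel. *)
From HB Require Import structures.
From mathcomp Require Import all_boot all_order all_algebra.
From mathcomp Require Import reals sequences exp.
From mathcomp Require Import ring lra.

Set Implicit Arguments.
Unset Strict Implicit.
Unset Printing Implicit Defensive.

Import Order.TTheory GRing.Theory Num.Theory.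
Local Open Scope ring_scope.

Lemma quadratic_ge0_discr (R : realFieldType) (p q r : R) : 0 <= p -> 0 <= q ->
  (forall s, 0 <= p + s * (2 * r) + s ^+ 2 * q) -> r ^+ 2 <= p * q.
Proof.
move=> p0 q0 Hs; have [q0'|qn0] := eqVneq q 0.
  have [->|rn0] := eqVneq r 0; first by rewrite q0' expr0n mulr0.
  have := Hs (- (p + 1) / (2 * r)); rewrite q0'.
  have -> : p + - (p + 1) / (2 * r) * (2 * r) + (- (p + 1) / (2 * r)) ^+ 2 * 0 = -1.
    by field; rewrite ?rn0 ?pnatr_eq0 ?andbT.
  by rewrite ler0N1.
have qp : 0 < q by rewrite lt_def qn0.
have := Hs (- r / q).
have -> : p + - r / q * (2 * r) + (- r / q) ^+ 2 * q = (p * q - r ^+ 2) / q by field.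
by rewrite pmulr_lge0 ?invr_gt0 // subr_ge0.
Qed.

Section Sigmoid.
Variable R : realType.

Lemma dsigmoidE (z : R) : dsigmoid z = (expR z + expR (- z) + 2)^-1.
Proof.
rewrite /dsigmoid expRN; have Ez := expR_gt0 z.
field; apply/and3P; split; rewrite gt_eqF //; nra.
Qed.

Lemma expR_sum_norm (z : R) : expR z + expR (- z) = expR `|z| + expR (- `|z|).
Proof.
have [z0|z0] := lerP 0 z; first by rewrite ger0_norm.
by rewrite ltr0_norm // opprK addrC.
Qed.

Lemma expR_sum_homo (s t : R) : 0 <= s -> s <= t ->
  expR s + expR (- s) <= expR t + expR (- t).
Proof.
move=> s0 st; rewrite !expRN -subr_ge0.
have Es : 1 <= expR s by rewrite -expR0 ler_expR.
have Est : expR s <= expR t by rewrite ler_expR.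
have Et : 1 <= expR t := le_trans Es Est.
have -> : expR t + (expR t)^-1 - (expR s + (expR s)^-1)
    = (expR t - expR s) * (expR s * expR t - 1) / (expR s * expR t).
  by field; apply/andP; split; rewrite gt_eqF // expR_gt0.
by rewrite divr_ge0 ?mulr_ge0 ?expR_ge0 // subr_ge0 // -[1]mulr1 ler_pM.
Qed.

Lemma ler_dsigmoid (z y : R) : `|z| <= `|y| -> dsigmoid y <= dsigmoid z.
Proof.
move=> zy; have pos u : 0 < expR u + expR (- u) + 2 :> R.
  by rewrite ltr_wpDl // addr_ge0 ?expR_ge0.
rewrite !dsigmoidE lef_pV2 ?posrE // lerD2r expR_sum_norm (expR_sum_norm y).
exact: expR_sum_homo.
Qed.

End Sigmoid.

Section QuadraticForms.
Variables (R : realType) (d : nat).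
Implicit Types (M : 'M[R]_d) (u y z : 'cV[R]_d).

Lemma trmx11 (M : 'M[R]_1) : M^T 0 0 = M 0 0.
Proof. by rewrite mxE. Qed.

Lemma inner_sym u z : inner u z = inner z u.
Proof. by rewrite /inner -trmx11 trmx_mul trmxK. Qed.

Lemma innerDl u y z : inner (u + y) z = inner u z + inner y z.
Proof. by rewrite /inner linearD /= mulmxDl mxE. Qed.

Lemma innerNl u z : inner (- u) z = - inner u z.
Proof. by rewrite /inner linearN /= mulNmx mxE. Qed.

Lemma innerBr u y z : inner z (u - y) = inner z u - inner z y.
Proof. by rewrite /inner mulmxBr !mxE. Qed.

Definition qform M y z : R := (y^T *m M *m z) 0 0.

Definition psd M := forall y, 0 <= qform M y y.

Lemma qform1_ge0 y : 0 <= qform 1%:M y y.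
Proof.
by rewrite /qform mulmx1 mxE sumr_ge0 // => i _; rewrite mxE -expr2 sqr_ge0.
Qed.

Lemma qform_sym M y z : M^T = M -> qform M z y = qform M y z.
Proof. by move=> MT; rewrite /qform -trmx11 !trmx_mul trmxK MT mulmxA. Qed.

Lemma qformDZ M y z s : qform M (y + s *: z) (y + s *: z)
  = qform M y y + s * (qform M y z + qform M z y) + s ^+ 2 * qform M z z.
Proof.
rewrite /qform [(y + _)^T]linearD /= linearZ /= !(mulmxDl, mulmxDr).
by rewrite -!scalemxAl -!scalemxAr !mxE; ring.
Qed.

Lemma qform_cauchy_schwarz M y z : M^T = M -> psd M ->
  qform M y z ^+ 2 <= qform M y y * qform M z z.
Proof.
move=> MT Mpsd; apply: quadratic_ge0_discr => // s.
by have := Mpsd (y + s *: z); rewrite qformDZ (qform_sym y z MT) -mulr2n mulr_natl.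
Qed.

Lemma mnorm_ge0 M y : 0 <= mnorm M y.
Proof. exact: sqrtr_ge0. Qed.

(* Cauchy-Schwarz for the dual pair of norms ||.||_{M^-1} and ||.||_M, applied
   to y := M^-T u, for which y^T M z = u^T z and y^T M y = u^T M^-1 u. *)
Lemma mnorm_cauchy_schwarz M u z : M^T = M -> psd M -> M \in unitmx ->
  `|inner u z| <= mnorm (invmx M) u * mnorm M z.
Proof.
move=> MT Mpsd Mu; pose y := (invmx M)^T *m u.
have cancel_inv (r : 'rV[R]_d) (v : 'cV[R]_d) : r *m invmx M *m M *m v = r *m v.
  by rewrite -(mulmxA r) mulVmx // mulmx1.
have yz : qform M y z = inner u z by rewrite /qform trmx_mul trmxK cancel_inv.
have yy : qform M y y = qform (invmx M) u u.
  by rewrite /qform trmx_mul trmxK cancel_inv -trmx11 !trmx_mul !trmxK.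
have := qform_cauchy_schwarz y z MT Mpsd; rewrite yz yy => cs.
have inv_psd : 0 <= qform (invmx M) u u by rewrite -yy.
have M_psd := Mpsd z.
rewrite /mnorm -sqrtrM // -sqrtr_sqr ler_sqrt //; exact: mulr_ge0.
Qed.

Definition gram (lam : R) (c : nat -> R) (f : nat -> 'cV[R]_d) (t : nat) : 'M[R]_d :=
  lam%:M + \sum_(1 <= i < t) c i *: (f i *m (f i)^T).

Variables (lam : R) (c : nat -> R) (f : nat -> 'cV[R]_d) (t : nat).
Hypothesis c_ge0 : forall i, (1 <= i < t)%N -> 0 <= c i.

Lemma gram_sym : (gram lam c f t)^T = gram lam c f t.
Proof.
rewrite /gram linearD /= tr_scalar_mx raddf_sum /=; congr (_ + _).
by apply: eq_bigr => i _; rewrite linearZ /= trmx_mul trmxK.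
Qed.

Lemma gram_qform_ge y : lam * qform 1%:M y y <= qform (gram lam c f t) y y.
Proof.
rewrite /qform mulmx1 /gram mulmxDr mulmxDl mul_mx_scalar -scalemxAl.
rewrite [X in _ <= X]mxE [X in _ <= X + _]mxE lerDl.
rewrite mulmx_sumr mulmx_suml summxE big_nat_cond.
apply: sumr_ge0 => i /andP[Hi _].
rewrite -scalemxAr -scalemxAl mxE !mulmxA -(mulmxA (y^T *m f i)) [X in _ * X]mxE.
rewrite big_ord1 -[((f i)^T *m y) 0 0]trmx11 trmx_mul trmxK -expr2.
by rewrite mulr_ge0 ?c_ge0 ?sqr_ge0.
Qed.

Hypothesis lam_gt0 : 0 < lam.

Lemma gram_psd : psd (gram lam c f t).
Proof.
by move=> y; rewrite (le_trans _ (gram_qform_ge y)) ?mulr_ge0 ?qform1_ge0 ?ltW.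
Qed.

Lemma gram_unit : gram lam c f t \in unitmx.
Proof.
rewrite unitmxE unitfE; apply/negP => /det0P [r rn0 rG].
have := gram_qform_ge r^T; rewrite /qform trmxK rG mul0mx [X in _ <= X]mxE.
rewrite pmulr_rle0 // mulmx1 mxE => Hle.
have sq_ge0 (k : 'I_d) : true -> 0 <= r 0 k * r^T k 0.
  by move=> _; rewrite !mxE -expr2 sqr_ge0.
have sum0 : \sum_k r 0 k * r^T k 0 = 0.
  by apply/eqP; rewrite eq_le Hle sumr_ge0.
apply/negP: rn0; rewrite negbK; apply/eqP/matrixP => i j; rewrite (ord1 i) mxE.
have /eqP := psumr_eq0P sq_ge0 sum0 (i := j) isT.
by rewrite !mxE -expr2 sqrf_eq0 => /eqP.
Qed.

Lemma gram_cauchy_schwarz u z :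
  `|inner u z| <= mnorm (invmx (gram lam c f t)) u * mnorm (gram lam c f t) z.
Proof. exact: mnorm_cauchy_schwarz gram_sym gram_psd gram_unit. Qed.

Lemma gram_inner_le beta u e : mnorm (gram lam c f t) e <= beta ->
  `|inner u e| <= beta * mnorm (invmx (gram lam c f t)) u.
Proof.
move=> e_le; rewrite mulrC (le_trans (gram_cauchy_schwarz _ _)) //.
by rewrite ler_wpM2l ?mnorm_ge0.
Qed.

Lemma gram_confidence_inner beta ths th u :
  mnorm (gram lam c f t) (ths - th) <= beta ->
  `|inner u ths| <= `|inner u th| + beta * mnorm (invmx (gram lam c f t)) u.
Proof.
move=> conf; have -> : inner u ths = inner u th + inner u (ths - th).
  by rewrite innerBr addrC subrK.
by rewrite (le_trans (ler_normD _ _)) // lerD2l gram_inner_le.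
Qed.

End QuadraticForms.

Lemma optimistic_pair_regret (R : realType) (d : nat)
    (ths th ps pa pb : 'cV[R]_d) (bonus : 'cV[R]_d -> R) :
  (forall u, inner (ths - th) u <= bonus u) ->
  inner (ps + pb) th + bonus (ps - pb) <= inner (pa + pb) th + bonus (pa - pb) ->
  inner (ps + pa) th + bonus (ps - pa) <= inner (pa + pb) th + bonus (pa - pb) ->
  2 * inner ths ps - inner ths pa - inner ths pb <= 2 * bonus (pa - pb).
Proof.
move=> gap sel_b sel_a; have gap_a := gap (ps - pa); have gap_b := gap (ps - pb).
move: sel_a sel_b gap_a gap_b.
rewrite !(innerDl, innerNl, innerBr) !(inner_sym ths) !(inner_sym th).
move: (bonus (ps - pa)) (bonus (ps - pb)) (bonus (pa - pb)) => ba bb bab.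
lra.
Qed.

Theorem mainTheorem8
  (R : realType) (d : nat) (X A : Type)
  (phi : X -> A -> 'cV[R]_d) (thetastar : 'cV[R]_d) (B kappa : R)
  (alpha lambda : R) (beta betat : nat -> R) (T : nat)
  (x : nat -> X) (a b astar : nat -> A) (l c o : nat -> bool)
  (theta : nat -> 'cV[R]_d) (w v : nat -> R) :
  (forall (y : X) (e : A), norm2 (phi y e) <= 1) ->
  norm2 thetastar <= B ->
  0 < kappa ->
  (forall (y : X) (e f : A) (th : 'cV[R]_d), norm2 th <= B ->
      kappa <= dsigmoid (inner (phi y e - phi y f) th)) ->
  0 < alpha -> 0 < lambda ->
  (forall t, 0 < beta t) -> (forall t, 0 < betat t) ->
  (forall t (e : A), (1 <= t <= T)%N ->
      inner thetastar (phi (x t) e) <= inner thetastar (phi (x t) (astar t))) ->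
  (forall t, o t = (if c t then ~~ l t else l t)) ->
  (forall t, (1 <= t <= T)%N -> mle_eq phi x a b lambda w o t (theta t)) ->
  (forall t, (1 <= t <= T)%N -> forall (e f : A),
      inner (phi (x t) e + phi (x t) f) (theta t)
        + betat t * mnorm (invmx (LambdaM phi x a b lambda w v t))
                          (phi (x t) e - phi (x t) f)
      <= inner (phi (x t) (a t) + phi (x t) (b t)) (theta t)
        + betat t * mnorm (invmx (LambdaM phi x a b lambda w v t))
                          (phi (x t) (a t) - phi (x t) (b t))) ->
  (forall t, (1 <= t <= T)%N ->
      w t = (let nr := mnorm (invmx (SigmaM phi x a b lambda kappa w t))
                              (dphi phi x a b t) in
             if nr == 0 then 1 else Num.min 1 (alpha / nr))) ->
  (forall t, (1 <= t <= T)%N ->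
      v t = Num.max kappa
              (dsigmoid (`|inner (dphi phi x a b t) (theta t)|
                 + beta t * mnorm (invmx (SigmaM phi x a b lambda kappa w t))
                                  (dphi phi x a b t)))) ->
  (forall t, (1 <= t <= T)%N ->
      mnorm (SigmaM phi x a b lambda kappa w t) (thetastar - theta t) <= beta t) ->
  (forall t, (1 <= t <= T)%N ->
      mnorm (LambdaM phi x a b lambda w v t) (thetastar - theta t) <= betat t) ->
  forall t, (1 <= t <= T)%N ->
    v t <= dsigmoid (inner (phi (x t) (a t) - phi (x t) (b t)) thetastar)
    /\ 2 * inner thetastar (phi (x t) (astar t))
         - inner thetastar (phi (x t) (a t)) - inner thetastar (phi (x t) (b t))
       <= 2 * betat t * mnorm (invmx (LambdaM phi x a b lambda w v t))
                              (phi (x t) (a t) - phi (x t) (b t)).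
Proof.
move=> _ thsB kappa_gt0 kappa_le alpha_gt0 lam_gt0 beta_gt0 _ _ _ _ select
  w_def v_def E1 E2 t t_range.
have past i : (1 <= i < t)%N -> (1 <= i <= T)%N.
  by case/andP: t_range => _ tT /andP[-> it]; rewrite (leq_trans (ltnW it)).
have w_ge0 i : (1 <= i < t)%N -> 0 <= w i.
  move/past/w_def => /= ->; case: ifP => // _.
  by rewrite le_min ler01 divr_ge0 ?mnorm_ge0 ?ltW.
have v_ge0 i : (1 <= i < t)%N -> 0 <= v i.
  by move/past/v_def => ->; rewrite le_max ltW.
split.
  rewrite (v_def t t_range) ge_max (kappa_le _ _ _ _ thsB) ler_dsigmoid //.
  rewrite [X in _ <= X]ger0_norm
    ?(addr_ge0, mulr_ge0 (ltW (beta_gt0 t)), mnorm_ge0) //.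
  have wk_ge0 i : (1 <= i < t)%N -> 0 <= w i * kappa.
    by move=> it; rewrite mulr_ge0 ?w_ge0 ?ltW.
  exact: (gram_confidence_inner (f := dphi phi x a b) wk_ge0 lam_gt0 _
    (E1 t t_range)).
pose bonus u := betat t * mnorm (invmx (LambdaM phi x a b lambda w v t)) u.
rewrite -mulrA; apply: (optimistic_pair_regret (bonus := bonus) _
  (select t t_range (astar t) (b t)) (select t t_range (astar t) (a t))) => u.
rewrite inner_sym (le_trans (ler_norm _)) //.
have wv_ge0 i : (1 <= i < t)%N -> 0 <= w i * v i.
  by move=> it; rewrite mulr_ge0 ?w_ge0 ?v_ge0.
exact: (gram_inner_le (f := dphi phi x a b) wv_ge0 lam_gt0 _ (E2 t t_range)).
Qed.
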